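(* Let $0\to A\to B\xrightarrow{p} C\to 0$ be a short exact sequence of modules with $A,B,C\in\mathcal G$, and let $B'$ be a strict subobject of $B$. Put $A'=A\cap B'$ and $C'=p(B')$. Then $A'$ is a strict subobject of $A$ and $C'$ is a strict subobject of $C$ (so also $B'/A'\cong C'$ embeds as a strict subobject of $B/A\cong C$).
   Context: Let $\Lambda$ be a finite dimensional algebra over a field and $\mathrm{mod}\text-\Lambda$ the category of finitely generated right $\Lambda$-modules. Fix a torsion class $\mathcal G\subseteq\mathrm{mod}\text-\Lambda$, i.e. a class of modules closed under isomorphisms, extensions and quotients. For $B\in\mathcal G$, a subobject of $B$ is a submodule of $B$ that lies in $\mathcal G$ (including $0$ and $B$). A subobject $A\subseteq B$ is a strict subobject if $A\cap B'\in\mathcal G$ for every subobject $B'$ of $B$. *)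

From HB Require Import structures.
From mathcomp Require Import all_boot all_order all_algebra all_field.
Set Implicit Arguments. Unset Strict Implicit. Unset Printing Implicit Defensive.
Import GRing.Theory.
Local Open Scope ring_scope.

(* Finitely generated right modules over a finite dimensional F-algebra Lam,
   represented concretely: a module of F-dimension n is a map
   act : Lam -> 'M[F]_n giving the right action on row vectors
   (v . a = v *m act a).  Module homomorphisms are matrices acting on the
   right of row vectors; submodules are row spaces of square matrices. *)

Record rmod (F : fieldType) (Lam : falgType F) := RMod {
  rdim : nat;
  ract : Lam -> 'M[F]_rdim }.

Definition is_rmod (F : fieldType) (Lam : falgType F) (M : rmod Lam) : Prop :=
  [/\ forall (k : F) (a b : Lam), ract M (k *: a + b) = k *: ract M a + ract M b,
      ract M 1 = 1%:M
    & forall a b : Lam, ract M (a * b) = ract M a *m ract M b].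

Definition is_hom (F : fieldType) (Lam : falgType F) (M N : rmod Lam)
  (f : 'M[F]_(rdim M, rdim N)) : Prop :=
  forall a : Lam, ract M a *m f = f *m ract N a.

(* A torsion class: closed under isomorphisms and quotients (i.e. images of
   surjective homomorphisms) and under extensions. *)
Definition torsion_class (F : fieldType) (Lam : falgType F)
  (G : rmod Lam -> Prop) : Prop :=
  (forall (M N : rmod Lam) (f : 'M[F]_(rdim M, rdim N)),
      is_rmod M -> is_rmod N -> is_hom f -> row_full f -> G M -> G N) /\
  (forall (K M N : rmod Lam) (f : 'M[F]_(rdim K, rdim M))
          (g : 'M[F]_(rdim M, rdim N)),
      is_rmod K -> is_rmod M -> is_rmod N -> is_hom f -> is_hom g ->
      row_free f -> row_full g -> (f == kermx g)%MS ->
      G K -> G N -> G M).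

Definition is_submod (F : fieldType) (Lam : falgType F) (M : rmod Lam)
  (U : 'M[F]_(rdim M)) : Prop :=
  forall a : Lam, (U *m ract M a <= U)%MS.

Definition sub_in (F : fieldType) (Lam : falgType F) (G : rmod Lam -> Prop)
  (M : rmod Lam) (U : 'M[F]_(rdim M)) : Prop :=
  exists N : rmod Lam, [/\ is_rmod N, G N &
    exists f : 'M[F]_(rdim N, rdim M), [/\ is_hom f, row_free f & (f == U)%MS]].

Definition subobject (F : fieldType) (Lam : falgType F) (G : rmod Lam -> Prop)
  (M : rmod Lam) (U : 'M[F]_(rdim M)) : Prop :=
  is_submod U /\ sub_in G U.

Definition strict_subobject (F : fieldType) (Lam : falgType F)
  (G : rmod Lam -> Prop) (M : rmod Lam) (U : 'M[F]_(rdim M)) : Prop :=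
  subobject G U /\
  forall U' : 'M[F]_(rdim M), subobject G U' -> sub_in G (U :&: U')%MS.

Definition preim_mx (F : fieldType) (m n : nat) (f : 'M[F]_(m, n))
  (V : 'M[F]_n) : 'M[F]_m := kermx (f *m cokermx V).

From HB Require Import structures.
From mathcomp Require Import all_boot all_order all_algebra all_field.
Set Implicit Arguments. Unset Strict Implicit. Unset Printing Implicit Defensive.
Import GRing.Theory.
Local Open Scope ring_scope.

(* A' is the preimage of B' under the injection i, and for a subobject A'' of A
   the intersection A' ∩ A'' is carried by i isomorphically onto B' ∩ i(A''),
   which lies in G by strictness of B'.  For C' = p(B') and a subobject C'' of C,
   the preimage p^-1(C'') is an extension of C'' by A, hence in G, so
   B' ∩ p^-1(C'') lies in G, and its image under p is C' ∩ C''. *)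

Section RowSpaces.
Variable F : fieldType.

Lemma sub_preim_mx m n k (f : 'M[F]_(m, n)) (U : 'M[F]_n) (X : 'M[F]_(k, m)) :
  (X <= preim_mx f U)%MS = (X *m f <= U)%MS.
Proof. by rewrite /preim_mx sub_kermx submxE mulmxA. Qed.

Lemma preim_mx_cap m n (f : 'M[F]_(m, n)) (U V : 'M[F]_n) :
  (preim_mx f (U :&: V) :=: preim_mx f U :&: preim_mx f V)%MS.
Proof.
apply/eqmxP/andP; split.
  have := submx_refl (preim_mx f (U :&: V)%MS).
  by rewrite sub_capmx !sub_preim_mx sub_capmx.
by rewrite sub_preim_mx sub_capmx -!sub_preim_mx capmxSl capmxSr.
Qed.

Lemma preim_mx_genM_free m n k (f : 'M[F]_(m, n)) (U : 'M[F]_(k, m)) :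
  row_free f -> (preim_mx f <<U *m f>> :=: U)%MS.
Proof.
move=> free_f; apply/eqmxP/andP; split.
  have := submx_refl (preim_mx f <<U *m f>>%MS).
  by rewrite sub_preim_mx genmxE submxMfree.
by rewrite sub_preim_mx genmxE.
Qed.

Lemma capmx_preimM m n k (f : 'M[F]_(m, n)) (U : 'M[F]_(k, m)) (V : 'M[F]_n) :
  ((U :&: preim_mx f V) *m f :=: U *m f :&: V)%MS.
Proof.
apply/eqmxP/andP; split.
  by rewrite sub_capmx submxMr ?capmxSl // -sub_preim_mx capmxSr.
case/submxP: (capmxSl (U *m f) V) => D hD.
rewrite hD mulmxA submxMr // sub_capmx submxMl sub_preim_mx -mulmxA -hD.
exact: capmxSr.
Qed.

End RowSpaces.

Section Modules.
Variables (F : fieldType) (Lam : falgType F).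

Lemma is_hom_comp (M N P : rmod Lam) (f : 'M[F]_(rdim M, rdim N))
  (g : 'M[F]_(rdim N, rdim P)) : is_hom f -> is_hom g -> is_hom (f *m g).
Proof. by move=> hf hg a; rewrite mulmxA hf -mulmxA hg mulmxA. Qed.

Lemma is_hom_factor (M N S : rmod Lam) (h : 'M[F]_(rdim M, rdim N))
  (r : 'M[F]_(rdim S, rdim N)) :
  is_hom h -> is_hom r -> row_free r -> (h <= r)%MS -> is_hom (h *m pinvmx r).
Proof.
move=> hh hr free_r le_hr a; apply: (row_free_inj free_r) => /=.
by rewrite -mulmxA mulmxKpV // -[RHS]mulmxA hr [RHS]mulmxA mulmxKpV.
Qed.

Lemma submod_preim (M N : rmod Lam) (f : 'M[F]_(rdim M, rdim N))
  (U : 'M[F]_(rdim N)) : is_hom f -> is_submod U -> is_submod (preim_mx f U).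
Proof.
move=> hf sU a; rewrite sub_preim_mx -mulmxA hf mulmxA.
by apply: submx_trans (submxMr _ _) (sU a); rewrite -sub_preim_mx.
Qed.

Lemma submod_image (M N : rmod Lam) (f : 'M[F]_(rdim M, rdim N))
  (U : 'M[F]_(rdim M)) : is_hom f -> is_submod U -> is_submod <<U *m f>>%MS.
Proof.
move=> hf sU a; rewrite (eqmxMr _ (genmxE _)) genmxE -mulmxA -hf mulmxA.
exact: submxMr.
Qed.

Definition subrmod (M : rmod Lam) (U : 'M[F]_(rdim M)) : rmod Lam :=
  @RMod F Lam (\rank U) (fun a => row_base U *m ract M a *m pinvmx (row_base U)).

Lemma subrmod_hom (M : rmod Lam) (U : 'M[F]_(rdim M)) :
  is_submod U -> @is_hom F Lam (subrmod U) M (row_base U).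
Proof.
move=> sU a /=; rewrite mulmxKpV // eq_row_base.
by apply: submx_trans (sU a); apply: submxMr; rewrite eq_row_base.
Qed.

Lemma subrmod_rmod (M : rmod Lam) (U : 'M[F]_(rdim M)) :
  is_rmod M -> is_submod U -> is_rmod (subrmod U).
Proof.
move=> [linM oneM mulM] sU.
have homU c : row_base U *m ract M c *m pinvmx (row_base U) *m row_base U
              = row_base U *m ract M c := subrmod_hom sU c.
have /row_free_inj freeU := row_base_free U.
split=> /=.
- by move=> k a b; rewrite linM mulmxDr mulmxDl -scalemxAr -scalemxAl.
- by apply: freeU; rewrite oneM mulmx1 mul1mx mulmxKpV.
- move=> a b; apply: freeU; rewrite [LHS]homU mulM -[RHS]mulmxA.
  by rewrite homU [RHS]mulmxA homU mulmxA.
Qed.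

End Modules.

Section TorsionClass.
Variables (F : fieldType) (Lam : falgType F) (G : rmod Lam -> Prop).

Lemma sub_in_eqmx (M : rmod Lam) (U V : 'M[F]_(rdim M)) :
  (U :=: V)%MS -> sub_in G U -> sub_in G V.
Proof.
move=> eqUV [N [rN GN [f [hf free_f /eqmxP eq_fU]]]].
exists N; split=> //; exists f; split=> //.
by apply/eqmxP; apply: eqmx_trans eq_fU eqUV.
Qed.

Lemma sub_in_preim_free (M N : rmod Lam) (f : 'M[F]_(rdim M, rdim N))
  (U : 'M[F]_(rdim N)) :
  is_hom f -> row_free f -> (U <= f)%MS -> sub_in G U -> sub_in G (preim_mx f U).
Proof.
move=> hf free_f le_Uf [P [rP GP [g [hg free_g /eqmxP eq_gU]]]].
have le_gf : (g <= f)%MS by rewrite eq_gU.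
exists P; split=> //; exists (g *m pinvmx f); split.
- exact: is_hom_factor.
- by rewrite /row_free -(mxrankMfree _ free_f) mulmxKpV.
- apply/andP; split; first by rewrite sub_preim_mx mulmxKpV // eq_gU.
  by rewrite -(submxMfree _ _ free_f) mulmxKpV // eq_gU -sub_preim_mx.
Qed.

Hypothesis hG : torsion_class G.

Lemma sub_in_image (N M : rmod Lam) (h : 'M[F]_(rdim N, rdim M))
  (U : 'M[F]_(rdim M)) :
  is_rmod N -> is_rmod M -> G N -> is_hom h -> (U :=: h)%MS -> sub_in G U.
Proof.
move=> rN rM GN hh eq_Uh.
have sU : is_submod U.
  move=> a; apply: submx_trans (submxMr _ (_ : U <= h)%MS) _.
    by rewrite eq_Uh.
  by rewrite -hh eq_Uh submxMl.
have le_hU : (h <= row_base U)%MS by rewrite eq_row_base eq_Uh.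
exists (subrmod U); split; first exact: subrmod_rmod.
  apply: (hG.1 N (subrmod U) (h *m pinvmx (row_base U))) => //.
  - exact: subrmod_rmod.
  - exact: is_hom_factor (subrmod_hom sU) (row_base_free U) le_hU.
  rewrite /row_full eqn_leq rank_leq_col /=.
  by apply: leq_trans (mxrankM_maxl _ (row_base U)); rewrite mulmxKpV // eq_Uh.
exists (row_base U); split; [exact: subrmod_hom | exact: row_base_free |].
by apply/eqmxP; apply: eq_row_base.
Qed.

Lemma sub_in_imageM (M N : rmod Lam) (f : 'M[F]_(rdim M, rdim N))
  (U : 'M[F]_(rdim M)) (V : 'M[F]_(rdim N)) :
  is_rmod M -> is_rmod N -> is_hom f ->
  sub_in G U -> (V :=: U *m f)%MS -> sub_in G V.
Proof.
move=> rM rN hf [P [rP GP [g [hg _ /eqmxP eq_gU]]]] eq_V.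
apply: (sub_in_image rP rN GP (is_hom_comp hg hf)).
exact: eqmx_trans eq_V (eqmx_sym (eqmxMr f eq_gU)).
Qed.

Lemma subobject_imageM (M N : rmod Lam) (f : 'M[F]_(rdim M, rdim N))
  (U : 'M[F]_(rdim M)) :
  is_rmod M -> is_rmod N -> is_hom f ->
  subobject G U -> subobject G <<U *m f>>%MS.
Proof.
move=> rM rN hf [sU GU]; split; first exact: submod_image.
exact: sub_in_imageM rM rN hf GU (genmxE _).
Qed.

Lemma subobject1 (M : rmod Lam) :
  is_rmod M -> G M -> subobject G (1%:M : 'M_(rdim M)).
Proof.
move=> rM GM; split=> [a|]; first exact: submx1.
exists M; split=> //; exists 1%:M; split.
- by move=> a; rewrite mul1mx mulmx1.
- by rewrite row_free_unit unitmx1.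
- by rewrite submx_refl.
Qed.

(* The preimage of U under p is an extension of U by ker p = A. *)
Lemma sub_in_preim_epi (A B C : rmod Lam)
  (i : 'M[F]_(rdim A, rdim B)) (p : 'M[F]_(rdim B, rdim C)) (U : 'M[F]_(rdim C)) :
  is_rmod A -> is_rmod B -> is_hom i -> is_hom p ->
  row_free i -> row_full p -> (i == kermx p)%MS -> G A ->
  is_submod U -> sub_in G U -> sub_in G (preim_mx p U).
Proof.
move=> rA rB hi hp free_i full_p /andP[le_ik le_ki] GA sU.
move=> [P [rP GP [g [hg free_g /eqmxP eq_gU]]]].
set W := preim_mx p U; set r := row_base W.
have sW : is_submod W := submod_preim hp sU.
have hr : @is_hom F Lam (subrmod W) B r := subrmod_hom sW.
have free_r : row_free r := row_base_free W.
have ip0 : i *m p = 0 by apply/sub_kermxP.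
have le_ir : (i <= r)%MS by rewrite eq_row_base sub_preim_mx ip0 sub0mx.
have le_rpg : (r *m p <= g)%MS by rewrite eq_gU -sub_preim_mx eq_row_base.
have le_grp : (g <= r *m p)%MS.
  have /submxP[D eq_U] : (U <= p)%MS by exact: submx_full.
  by rewrite eq_gU eq_U submxMr // eq_row_base sub_preim_mx -eq_U.
pose f := i *m pinvmx r; pose h := r *m p *m pinvmx g.
have fr : f *m r = i := mulmxKpV le_ir.
have hg_rp : h *m g = r *m p := mulmxKpV le_rpg.
have rW : is_rmod (subrmod W) := subrmod_rmod rB sW.
exists (subrmod W); split=> //; last first.
  by exists r; split=> //; apply/eqmxP; apply: eq_row_base.
apply: (hG.2 A (subrmod W) P f h) => //.
- exact: is_hom_factor.
- exact: is_hom_factor (is_hom_comp hr hp) hg free_g le_rpg.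
- by rewrite /row_free -(mxrankMfree _ free_r) fr.
- rewrite /row_full eqn_leq rank_leq_col /=.
  apply: (@leq_trans (\rank g)); first by rewrite (eqP free_g).
  by apply: leq_trans (mxrankS le_grp) _; rewrite -hg_rp mxrankM_maxl.
apply/andP; split.
  by apply/sub_kermxP; rewrite /h (mulmxA f) (mulmxA f) fr ip0 !mul0mx.
rewrite -(submxMfree _ _ free_r) fr; apply: submx_trans le_ki.
by apply/sub_kermxP; rewrite -mulmxA -hg_rp mulmxA mulmx_ker mul0mx.
Qed.

End TorsionClass.

Theorem mainTheorem2 (F : fieldType) (Lam : falgType F)
  (G : rmod Lam -> Prop) (hG : torsion_class G)
  (A B C : rmod Lam)
  (hA : is_rmod A) (hB : is_rmod B) (hC : is_rmod C)
  (i : 'M[F]_(rdim A, rdim B)) (p : 'M[F]_(rdim B, rdim C))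
  (hi : is_hom i) (hp : is_hom p)
  (i_inj : row_free i) (p_surj : row_full p) (exact : (i == kermx p)%MS)
  (GA : G A) (GB : G B) (GC : G C)
  (B' : 'M[F]_(rdim B)) (hB' : strict_subobject G B') :
  strict_subobject G (preim_mx i B') /\ strict_subobject G (<<B' *m p>>%MS).
Proof.
have [[sB' _] strictB'] := hB'.
have capA' A'' : subobject G A'' -> sub_in G (preim_mx i B' :&: A'')%MS.
  move=> /(subobject_imageM hG hA hB hi)/strictB' GBA.
  have le_i : (B' :&: <<A'' *m i>> <= i)%MS.
    by rewrite (submx_trans (capmxSr _ _)) // genmxE submxMl.
  apply: sub_in_eqmx (sub_in_preim_free hi i_inj le_i GBA).
  apply: eqmx_trans (preim_mx_cap _ _ _) _.
  exact: cap_eqmx (eqmx_refl _) (preim_mx_genM_free _ i_inj).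
split.
  split=> //; split; first exact: submod_preim.
  by apply: sub_in_eqmx (capA' _ (subobject1 hA GA)); rewrite capmx1.
split=> [|C'' [sC'' GC'']]; first exact: subobject_imageM hB'.1.
have GpC'' := sub_in_preim_epi hG hA hB hi hp i_inj p_surj exact GA sC'' GC''.
have /strictB' GBpC := conj (submod_preim hp sC'') GpC''.
apply: (sub_in_imageM hG hB hC hp GBpC).
apply: eqmx_trans _ (eqmx_sym (capmx_preimM _ _ _)).
exact: cap_eqmx (genmxE _) (eqmx_refl _).
Qed.
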